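(* Let $M,N,p,r\ge1$. If $i$ is constant, or if the multisets $\{(a_y,b_y)\}_{y=1}^p$ and $\{(a_y,b_{y+1})\}_{y=1}^p$ coincide, then $(E_x)$ holds for all $x$. The normalized number $\beta_p^r(M,N)$ of triples $(i,a,b)$ satisfying one of these two conditions (divided by $M^{p+r}N^p$) equals $$\beta_p^r(M,N)=\delta_p(M,N)+\frac{1}{M^{r-1}}\big(1-\delta_p(M,N)\big),$$ and $\beta_p^r(M,N)=d_p^r(M,N)$ whenever $M=1$, or $N=1$, or $r=1$, or $p\le3$.
   Context: For integers $M,N,p,r\ge1$, consider triples $(i,a,b)$ with $i\in\mathbb Z_M^r$, $a\in\mathbb Z_M^p$, $b\in\mathbb Z_N^p$, with cyclic conventions $i_{r+1}=i_1$, $b_{p+1}=b_1$. For $x\in\{1,\dots,r\}$, condition $(E_x)$ says that the multisets $\{(i_x+a_y,b_y),(i_{x+1}+a_y,b_{y+1}):y=1,\dots,p\}$ and $\{(i_x+a_y,b_{y+1}),(i_{x+1}+a_y,b_y):y=1,\dots,p\}$ of elements of $\mathbb Z_M\times\mathbb Z_N$ (counted with multiplicity) coincide. Define $d_p^r(M,N)=\frac{1}{M^{p+r}N^p}\#\{(i,a,b):(E_x)\text{ holds for all }x\}$ and $\delta_p(M,N)=\frac{1}{(MN)^p}\#\{(a,b)\in\mathbb Z_M^p\times\mathbb Z_N^p:\{(a_y,b_y)\}_{y=1}^p=\{(a_y,b_{y+1})\}_{y=1}^p\text{ as multisets}\}$. A tuple is constant if all its entries are equal. *)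

(* Z_M is represented by 'I_M with arithmetic mod M
   (valid for every M >= 1, unlike 'Z_M). *)
From HB Require Import structures.
From mathcomp Require Import all_boot all_order all_algebra.
Set Implicit Arguments. Unset Strict Implicit. Unset Printing Implicit Defensive.
Import GRing.Theory Num.Theory.

(* i in Z_M^r, a in Z_M^p, b in Z_N^p *)
Definition triple (M N p r : nat) : finType :=
  ({ffun 'I_r -> 'I_M} * {ffun 'I_p -> 'I_M} * {ffun 'I_p -> 'I_N})%type.

(* ordS x is the cyclic successor x+1 (so i_{r+1} = i_1, b_{p+1} = b_1). *)

Definition condE (M N p r : nat) (i : {ffun 'I_r -> 'I_M})
    (a : {ffun 'I_p -> 'I_M}) (b : {ffun 'I_p -> 'I_N}) (x : 'I_r) : bool :=
  perm_eq
    (flatten [seq [:: (((i x : nat) + a y) %% M, (b y : nat));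
                      (((i (ordS x) : nat) + a y) %% M, (b (ordS y) : nat))]
             | y <- enum 'I_p])
    (flatten [seq [:: (((i x : nat) + a y) %% M, (b (ordS y) : nat));
                      (((i (ordS x) : nat) + a y) %% M, (b y : nat))]
             | y <- enum 'I_p]).

Definition allE (M N p r : nat) (t : triple M N p r) : bool :=
  let: (i, a, b) := t in [forall x, condE i a b x].

Definition condDelta (M N p : nat) (a : {ffun 'I_p -> 'I_M})
    (b : {ffun 'I_p -> 'I_N}) : bool :=
  perm_eq [seq ((a y : nat), (b y : nat)) | y <- enum 'I_p]
          [seq ((a y : nat), (b (ordS y) : nat)) | y <- enum 'I_p].

Definition constant_tuple (n M : nat) (i : {ffun 'I_n -> 'I_M}) : bool :=
  [forall x, forall y, i x == i y].

Definition d_pr (M N p r : nat) : rat :=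
  (#|[set t : triple M N p r | allE t]|%:R / (M ^ (p + r) * N ^ p)%:R)%R.

Definition delta_p (M N p : nat) : rat :=
  (#|[set ab : {ffun 'I_p -> 'I_M} * {ffun 'I_p -> 'I_N} | condDelta ab.1 ab.2]|%:R
     / ((M * N) ^ p)%:R)%R.

Definition beta_pr (M N p r : nat) : rat :=
  (#|[set t : triple M N p r |
        constant_tuple t.1.1 || condDelta t.1.2 t.2]|%:R
     / (M ^ (p + r) * N ^ p)%:R)%R.

(* Sufficiency: (E_x) compares two multisets, each the union of a part read at
   height i_x and a part read at height i_{x+1}.  If i_x = i_{x+1} the two
   sides differ only by swapping the two pairs of each y; if
   {(a_y,b_y)} = {(a_y,b_{y+1})}, the two parts agree separately after
   translating the first coordinate by i_x resp. i_{x+1}.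

   Counting: exactly M of the M^r tuples i are constant, and for the other ones
   the triple is counted iff (a,b) satisfies the Delta-condition, so
   beta = (M (MN)^p + (M^r - M) #Delta) / (M^(p+r) N^p).

   Necessity: for M = 1 or r = 1 every i is constant, and for N = 1 every (a,b)
   satisfies the Delta-condition.  Otherwise pick x with u := i_x <> v := i_{x+1}.
   Since u + a and v + a never agree, a two-element fibre of (E_x) over a value
   of b that occurs only once among the b_y identifies two of the a's; for
   p <= 3 this yields the Delta-condition in every pattern of coincidences
   among b_1, ..., b_p. *)
From HB Require Import structures.
From mathcomp Require Import all_boot all_order all_algebra.
Import GRing.Theory Num.Theory.
From mathcomp Require Import ring.

Lemma constant_tupleP n M (i : {ffun 'I_n -> 'I_M}) :
  reflect (forall x y, i x = i y) (constant_tuple i).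
Proof.
apply: (iffP forallP) => [C x y | C x]; last by apply/forallP => y; apply/eqP/C.
by apply/eqP; have /forallP := C x; apply.
Qed.

Lemma constant_tupleN_ordS n M (i : {ffun 'I_n -> 'I_M}) :
  ~~ constant_tuple i -> exists x, i x != i (ordS x).
Proof.
move=> nc; apply/existsP; apply: contraR nc => /existsPn iS.
case: n i iS => [|n] i iS; apply/constant_tupleP; first by case.
suff i0 k (x : 'I_n.+1) : x = k :> nat -> i x = i ord0.
  by move=> x y; rewrite !(i0 _ _ erefl).
elim: k x => [|k IHk] x xk; first by congr (i _); apply: val_inj.
have Sk : k.+1 < n.+1 by rewrite -xk ltn_ord.
have -> : x = ordS (inord k) by apply: val_inj; rewrite /= inordK ?xk ?modn_small // ltnW.
by move/negPn/eqP: (iS (inord k)) => <-; apply: IHk; rewrite inordK // ltnW.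
Qed.

Lemma condDelta_ordS_inv M N p (a : {ffun 'I_p -> 'I_M}) (b : {ffun 'I_p -> 'I_N}) :
  (forall y, b (ordS y) = b y) -> condDelta a b.
Proof.
by move=> bS; rewrite /condDelta (eq_map (fun y => congr1 (pair _) (congr1 val (bS y)))).
Qed.

Lemma perm_flatten_swap {T : Type} {X : eqType} (s : seq T) (f g : T -> X) :
  perm_eq (flatten [seq [:: f y; g y] | y <- s]) (flatten [seq [:: g y; f y] | y <- s]).
Proof. by elim: s => //= y s /permP IHs; apply/permP => P /=; rewrite IHs; ring. Qed.

Lemma perm_flatten_cat {T : Type} {X : eqType} (s : seq T) (f g : T -> X) :
  perm_eq (flatten [seq [:: f y; g y] | y <- s]) (map f s ++ map g s).
Proof.
by elim: s => //= y s /permP IHs; apply/permP => P /=; rewrite IHs !count_cat /=; ring.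
Qed.

Lemma condE_constant M N p r (i : {ffun 'I_r -> 'I_M}) (a : {ffun 'I_p -> 'I_M})
    (b : {ffun 'I_p -> 'I_N}) x :
  constant_tuple i -> condE i a b x.
Proof. by move=> /constant_tupleP C; rewrite /condE (C (ordS x) x) perm_flatten_swap. Qed.

Lemma condE_condDelta M N p r (i : {ffun 'I_r -> 'I_M}) (a : {ffun 'I_p -> 'I_M})
    (b : {ffun 'I_p -> 'I_N}) x :
  condDelta a b -> condE i a b x.
Proof.
move=> D; rewrite /condE (permPl (perm_flatten_cat _ _ _)) perm_sym.
rewrite (permPl (perm_flatten_cat _ _ _)).
pose shift (u : nat) (z : nat * nat) := ((u + z.1) %% M, z.2).
have D' := etrans (perm_sym _ _) D.
have := perm_cat (perm_map (shift (i x)) D') (perm_map (shift (i (ordS x))) D).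
by rewrite -!map_comp.
Qed.

Lemma condE_sufficient M N p r (i : {ffun 'I_r -> 'I_M}) (a : {ffun 'I_p -> 'I_M})
    (b : {ffun 'I_p -> 'I_N}) :
  constant_tuple i || condDelta a b -> forall x, condE i a b x.
Proof. by case/orP => [C | D] x; [apply: condE_constant | apply: condE_condDelta]. Qed.

Lemma perm_eq_fibre {T S : eqType} {s1 s2 : seq (T * S)} (c : S) :
  perm_eq s1 s2 -> perm_eq [seq z.1 | z <- s1 & z.2 == c] [seq z.1 | z <- s2 & z.2 == c].
Proof. by move=> s12; apply/perm_map/perm_filter. Qed.

Lemma perm_eq2_mismatch {T : eqType} {x y z w : T} :
  perm_eq [:: x; y] [:: z; w] -> z != x -> x = w.
Proof.
move=> e zx; have : x \in [:: z; w] by rewrite -(perm_mem e) mem_head.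
by rewrite !inE eq_sym (negbTE zx) => /eqP.
Qed.

Ltac perm_eq_by_count := apply/permP => ? /=; ring.

Section ShiftedRows.
(* [xk] and [tk] stand for u + a_k and v + a_k with u <> v. *)
Context {T S : eqType} {x0 x1 x2 t0 t1 t2 : T} {y0 y1 y2 : S}.
Hypotheses (tx0 : t0 != x0) (tx1 : t1 != x1).

(* Over a value taken by a single [yk], both fibres have two elements, one
   [x]- and one [t]-entry, and [perm_eq2_mismatch] identifies the [x]-entries. *)
Lemma perm_eq_shifted2 :
  perm_eq [:: (x0, y0); (t0, y1); (x1, y1); (t1, y0)]
          [:: (x0, y1); (t0, y0); (x1, y0); (t1, y1)] ->
  perm_eq [:: (x0, y0); (x1, y1)] [:: (x0, y1); (x1, y0)].
Proof.
move=> e; have [-> // | y01] := eqVneq y0 y1.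
have := perm_eq_fibre y0 e; rewrite /= eqxx (eq_sym y1) (negbTE y01) /=.
by move/perm_eq2_mismatch/(_ tx0) ->; perm_eq_by_count.
Qed.

Lemma perm_eq_shifted3 :
  perm_eq [:: (x0, y0); (t0, y1); (x1, y1); (t1, y2); (x2, y2); (t2, y0)]
          [:: (x0, y1); (t0, y0); (x1, y2); (t1, y1); (x2, y0); (t2, y2)] ->
  perm_eq [:: (x0, y0); (x1, y1); (x2, y2)] [:: (x0, y1); (x1, y2); (x2, y0)].
Proof.
move=> e; have F c := perm_eq_fibre c e.
have [e01 | y01] := eqVneq y0 y1.
  have [<- | y02] := eqVneq y0 y2; first by rewrite -e01.
  rewrite -e01 in F *; have := F y2; rewrite /= eqxx (negbTE y02) /= perm_sym.
  by move/perm_eq2_mismatch/(_ tx1) <-; perm_eq_by_count.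
have [e12 | y12] := eqVneq y1 y2.
  rewrite -e12 in F *; have := F y0; rewrite /= eqxx (eq_sym y1) (negbTE y01) /=.
  by move/perm_eq2_mismatch/(_ tx0) ->; perm_eq_by_count.
have [e02 | y02] := eqVneq y0 y2.
  rewrite -e02 in F *; have := F y1; rewrite /= eqxx (negbTE y01) /= perm_sym.
  by move/perm_eq2_mismatch/(_ tx0) <-; perm_eq_by_count.
have := F y0; rewrite /= eqxx (eq_sym y1) (eq_sym y2) (negbTE y01) (negbTE y02) /=.
move/perm_eq2_mismatch/(_ tx0) => x02.
have := F y1; rewrite /= eqxx (negbTE y01) (eq_sym y2) (negbTE y12) /= perm_sym.
by move/perm_eq2_mismatch/(_ tx0) => x01; rewrite -x01 -x02; perm_eq_by_count.
Qed.

End ShiftedRows.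

Lemma modn_addKl M u z : u <= M -> z < M -> ((u + z) %% M + (M - u)) %% M = z.
Proof. by move=> uM zM; rewrite modnDml addnAC subnKC // modnDl modn_small. Qed.

Lemma perm_eq_translate_inv M u (s1 s2 : seq (nat * nat)) :
  u <= M -> all (fun z => z.1 < M) s1 -> all (fun z => z.1 < M) s2 ->
  perm_eq [seq ((u + z.1) %% M, z.2) | z <- s1] [seq ((u + z.1) %% M, z.2) | z <- s2] ->
  perm_eq s1 s2.
Proof.
move=> uM s1M s2M; set back := fun z : nat * nat => ((z.1 + (M - u)) %% M, z.2).
have backK s :
    all (fun z => z.1 < M) s -> map back [seq ((u + z.1) %% M, z.2) | z <- s] = s.
  move=> /allP sM; rewrite -map_comp map_id_in // => -[z w] /sM /= zM.
  by rewrite /back /= modn_addKl.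
by move/(perm_map back); rewrite !backK.
Qed.

Lemma translate_neq M u v z : u < M -> v < M -> u != v -> (v + z) %% M != (u + z) %% M.
Proof. by move=> uM vM uv; rewrite eqn_modDr !modn_small // eq_sym. Qed.

Lemma enum_ord_inord n : enum 'I_n.+1 = [seq inord k | k <- iota 0 n.+1].
Proof.
apply: (inj_map val_inj); rewrite val_enum_ord -map_comp map_id_in // => k.
by rewrite mem_iota /= => /inordK.
Qed.

Lemma ordS_inord n k : k < n.+1 -> ordS (inord k : 'I_n.+1) = inord (k.+1 %% n.+1).
Proof. by move=> kn; apply: val_inj; rewrite /= inordK // inordK // ltn_mod. Qed.

Lemma condDelta_condE_small M N p r (i : {ffun 'I_r -> 'I_M}) (a : {ffun 'I_p -> 'I_M})
    (b : {ffun 'I_p -> 'I_N}) x :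
  p <= 3 -> i x != i (ordS x) -> condE i a b x -> condDelta a b.
Proof.
move=> p3 ixS; have tr z := @translate_neq M _ _ z (ltn_ord _) (ltn_ord _) ixS.
case: p a b p3 => [|[|[|[|//]]]] a b _ E.
- by apply: condDelta_ordS_inv => -[].
- by apply: condDelta_ordS_inv => y; rewrite [ordS y]ord1 [y]ord1.
all: move: E; rewrite /condE /condDelta !enum_ord_inord /= !ordS_inord //.
all: rewrite !modnn !(@modn_small 1) ?(@modn_small 2) // => E.
all: apply: (@perm_eq_translate_inv M (i x)); rewrite ?(ltnW (ltn_ord _)) //= ?ltn_ord //.
- exact: perm_eq_shifted2 (tr _) E.
- exact: perm_eq_shifted3 (tr _) (tr _) E.
Qed.

Lemma condE_necessary M N p r (i : {ffun 'I_r -> 'I_M}) (a : {ffun 'I_p -> 'I_M})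
    (b : {ffun 'I_p -> 'I_N}) :
  [\/ M = 1, N = 1, r = 1 | p <= 3] ->
  (forall x, condE i a b x) -> constant_tuple i || condDelta a b.
Proof.
case=> [M1 | N1 | r1 | p3] E; first (subst M; apply/orP; left).
- by apply/constant_tupleP => x y; rewrite [i x]ord1 [i y]ord1.
- subst N; apply/orP; right.
  by apply: condDelta_ordS_inv => y; rewrite [b _]ord1 [b y]ord1.
- by subst r; apply/orP; left; apply/constant_tupleP => x y; rewrite [x]ord1 [y]ord1.
have [// | /constant_tupleN_ordS [x ixS]] := boolP (constant_tuple i).
exact: condDelta_condE_small p3 ixS (E x).
Qed.

Lemma card_set_sum (T : finType) (P : pred T) : #|[set t | P t]| = \sum_t P t.
Proof.
by rewrite -sum1_card big_mkcond; apply: eq_bigr => t _; rewrite inE; case: (P t).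
Qed.

Lemma sum_pair (X Y : finType) (F : X * Y -> nat) : \sum_t F t = \sum_x \sum_y F (x, y).
Proof. by rewrite pair_big; apply: eq_bigr => -[]. Qed.

Lemma card_set_orb_split (I A B : finType) (c : pred I) (d : A -> B -> bool) :
  #|[set t : I * A * B | c t.1.1 || d t.1.2 t.2]| =
  #|[set i | c i]| * (#|A| * #|B|)
  + (#|I| - #|[set i | c i]|) * #|[set ab : A * B | d ab.1 ab.2]|.
Proof.
have sum_d : \sum_a \sum_b d a b = #|[set ab : A * B | d ab.1 ab.2]|.
  by rewrite card_set_sum (@sum_pair A B).
rewrite [LHS]card_set_sum (@sum_pair (I * A)%type B) (@sum_pair I A) (bigID c) /=.
rewrite [X in X + _](eq_bigr (fun=> #|A| * #|B|)) => [|i ->]; last first.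
  by rewrite -[RHS]sum_nat_const; apply: eq_bigr => a _; rewrite sum1_card.
rewrite [X in _ + X](eq_bigr (fun=> #|[set ab : A * B | d ab.1 ab.2]|)); last first.
  move=> i /negbTE ci; rewrite -sum_d.
  by apply: eq_bigr => a _; apply: eq_bigr => b _; rewrite ci.
rewrite !sum_nat_const -(cardC [set i | c i]) addKn.
by congr (_ * _ + _ * _); apply: eq_card => i; rewrite !inE.
Qed.

Lemma card_constant_tuple M r :
  0 < r -> #|[set i : {ffun 'I_r -> 'I_M} | constant_tuple i]| = M.
Proof.
case: r => // r _.
have -> :
    [set i : {ffun 'I_r.+1 -> 'I_M} | constant_tuple i] = [set [ffun=> m] | m : 'I_M].
  apply/setP => i; rewrite inE; apply/constant_tupleP/imsetP => [C | [m _ ->] x y].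
    by exists (i ord0) => //; apply/ffunP => x; rewrite ffunE (C x ord0).
  by rewrite !ffunE.
by rewrite card_imset ?card_ord // => m m' /ffunP /(_ ord0); rewrite !ffunE.
Qed.

Lemma beta_formula M N p r D : 0 < M -> 0 < N -> 0 < r ->
  ((M * (M ^ p * N ^ p) + (M ^ r - M) * D)%:R / (M ^ (p + r) * N ^ p)%:R : rat)%R =
  (D%:R / ((M * N) ^ p)%:R + 1 / (M ^ (r - 1))%:R * (1 - D%:R / ((M * N) ^ p)%:R))%R.
Proof.
move=> M0 N0; case: r => // r _.
have M_le : M <= M ^ r.+1 by rewrite expnS leq_pmulr // expn_gt0 M0.
rewrite subn1 /= natrD !natrM natrB // !natrX natrM exprD exprS exprMn.
have M_neq0 : (M%:R : rat) != 0%R by rewrite pnatr_eq0 -lt0n.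
have N_neq0 : (N%:R : rat) != 0%R by rewrite pnatr_eq0 -lt0n.
by field; rewrite !expf_neq0.
Qed.

Theorem theorem3p5 (M N p r : nat) :
  (0 < M)%N -> (0 < N)%N -> (0 < p)%N -> (0 < r)%N ->
  [/\ (forall (i : {ffun 'I_r -> 'I_M}) (a : {ffun 'I_p -> 'I_M})
              (b : {ffun 'I_p -> 'I_N}),
         constant_tuple i || condDelta a b -> forall x : 'I_r, condE i a b x),
      beta_pr M N p r =
        (delta_p M N p + (1 / (M ^ (r - 1))%:R) * (1 - delta_p M N p))%R
    & [\/ M = 1%N, N = 1%N, r = 1%N | (p <= 3)%N] ->
        beta_pr M N p r = d_pr M N p r].
Proof.
move=> M0 N0 _ r0; split.
- exact: condE_sufficient.
- rewrite /beta_pr /delta_p card_set_orb_split card_constant_tuple // !card_ffun !card_ord.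
  exact: beta_formula.
- move=> small; rewrite /beta_pr /d_pr; congr (_%:R / _)%R.
  apply: eq_card => -[[i a] b]; rewrite !inE; apply/idP/forallP.
    exact: condE_sufficient.
  exact: condE_necessary.
Qed.
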